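(* Assume $f$ satisfies conditions (A0)–(A3) below, with $R$ the constant from (A1). Then every $2\pi$-periodic solution $x$ of $\ddot x(t)=f(t,x(t),\mathbf x_t,\dot x(t))$ satisfies $|x(t)|\le R$ for all $t\in\mathbb R$.
   Context: Let $n,m\ge 1$ be integers, $\mathbf V=\mathbb R^n$ with Euclidean inner product $x\bullet z$ and norm $|x|$. For $\mathbf y=(y^1,\dots,y^m)\in\mathbf V^m$ put $|\mathbf y|:=\max_{j}|y^j|$. Fix reals $0=\tau_0<\tau_1<\dots<\tau_m<2\pi$ with $\tau_{m-j+1}=2\pi-\tau_j$ for $j=1,\dots,m$. Let $f:\mathbb R\times\mathbf V\times\mathbf V^m\times\mathbf V\to\mathbf V$, and for $x:\mathbb R\to\mathbf V$ put $\mathbf x_t:=(x(t-\tau_1),\dots,x(t-\tau_m))$. A $2\pi$-periodic solution is a $C^2$ function $x:\mathbb R\to\mathbf V$ with $x(t+2\pi)=x(t)$ and $\ddot x(t)=f(t,x(t),\mathbf x_t,\dot x(t))$ for all $t$. Conditions: (A0) $f$ is continuous and $2\pi$-periodic in $t$. (A1) There is $R>0$ such that for all $t$, $x,z\in\mathbf V$, $\mathbf y\in\mathbf V^m$: if $|x|\ge R$, $|\mathbf y|\le|x|$ and $x\bullet z=0$, then $x\bullet f(t,x,\mathbf y,z)>0$. (A2) There is a continuous $\phi:[0,\infty)\to(0,\infty)$ with $\int_0^\infty \frac{s\,ds}{\phi(s)}=\infty$ and $|f(t,x,\mathbf y,z)|\le\phi(|z|)$ whenever $|x|\le R$, $|\mathbf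 y|\le R$. (A3) There are $\alpha>0,K>0$ with $|f(t,x,\mathbf y,z)|\le\alpha(x\bullet f(t,x,\mathbf y,z)+|z|^2)+K$ whenever $|x|\le R$, $|\mathbf y|\le R$. *)

From HB Require Import structures.
From mathcomp Require Import all_boot all_order all_algebra.
From mathcomp Require Import all_classical all_reals all_analysis.
Set Implicit Arguments. Unset Strict Implicit. Unset Printing Implicit Defensive.
Import Order.TTheory GRing.Theory Num.Theory.
Import numFieldNormedType.Exports.
Local Open Scope ring_scope.
Local Open Scope classical_set_scope.

Definition edot (R : realType) (n : nat) (x z : 'rV[R]_n) : R :=
  \sum_(k < n) x 0 k * z 0 k.

Definition enorm (R : realType) (n : nat) (x : 'rV[R]_n) : R :=
  Num.sqrt (edot x x).

(* elements of V^m are m x n matrices, row j = y^j;  |y| = max_j |y^j| *)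
Definition mnorm (R : realType) (m n : nat) (y : 'M[R]_(m, n)) : R :=
  \big[Num.max/0]_(j < m) enorm (row j y).

(* x_t = (x(t - tau_1), ..., x(t - tau_m)) *)
Definition delayvec (R : realType) (m n : nat) (tau : nat -> R)
  (x : R -> 'rV[R]_n) (t : R) : 'M[R]_(m, n) :=
  \matrix_(j < m, k < n) x (t - tau j.+1) 0 k.

Definition admissible_delays (R : realType) (m : nat) (tau : nat -> R) : Prop :=
  [/\ tau 0%N = 0,
      (forall j, (j < m)%N -> tau j < tau j.+1),
      tau m < 2 * pi
    & (forall j, (1 <= j <= m)%N -> tau (m - j + 1)%N = 2 * pi - tau j)].

Definition periodic_solution (R : realType) (m n : nat) (tau : nat -> R)
  (f : R -> 'rV[R]_n -> 'M[R]_(m, n) -> 'rV[R]_n -> 'rV[R]_n)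
  (x : R -> 'rV[R]_n) : Prop :=
  [/\ (forall t, derivable x t 1),
      (forall t, derivable x^`() t 1),
      continuous x^`()^`(),
      (forall t, x (t + 2 * pi) = x t)
    & (forall t, x^`()^`() t = f t (x t) (delayvec m tau x t) (x^`() t))].

Definition condA0 (R : realType) (m n : nat)
  (f : R -> 'rV[R]_n -> 'M[R]_(m, n) -> 'rV[R]_n -> 'rV[R]_n) : Prop :=
  continuous (fun p : R * 'rV[R]_n * 'M[R]_(m, n) * 'rV[R]_n =>
                f p.1.1.1 p.1.1.2 p.1.2 p.2)
  /\ (forall t x y z, f (t + 2 * pi) x y z = f t x y z).

Definition condA1 (R : realType) (m n : nat)
  (f : R -> 'rV[R]_n -> 'M[R]_(m, n) -> 'rV[R]_n -> 'rV[R]_n) (R0 : R) : Prop :=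
  forall t x y z, R0 <= enorm x -> mnorm y <= enorm x -> edot x z = 0 ->
    0 < edot x (f t x y z).

Definition condA2 (R : realType) (m n : nat)
  (f : R -> 'rV[R]_n -> 'M[R]_(m, n) -> 'rV[R]_n -> 'rV[R]_n) (R0 : R) : Prop :=
  exists phi : R -> R,
    [/\ {within `[0, +oo[, continuous phi},
        (forall s, 0 <= s -> 0 < phi s),
        (\int[lebesgue_measure]_(s in (`[0%R, +oo[ : set R)) (s / phi s)%:E = +oo)%E
      & (forall t x y z, enorm x <= R0 -> mnorm y <= R0 ->
           enorm (f t x y z) <= phi (enorm z))].

Definition condA3 (R : realType) (m n : nat)
  (f : R -> 'rV[R]_n -> 'M[R]_(m, n) -> 'rV[R]_n -> 'rV[R]_n) (R0 : R) : Prop :=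
  exists alpha K : R, [/\ 0 < alpha, 0 < K &
    forall t x y z, enorm x <= R0 -> mnorm y <= R0 ->
      enorm (f t x y z) <= alpha * (edot x (f t x y z) + enorm z ^+ 2) + K].

(* At a maximum point t0 of |x|^2, which exists by periodicity, (x.x)'(t0) = 2 x.x' = 0, so the
   second-derivative test gives (x.x)''(t0) = 2(|x'|^2 + x.x'') <= 0.  If |x(t0)| >= R, then every
   delayed value satisfies |x(t0 - tau_j)| <= |x(t0)| and (A1) makes x.x''(t0) > 0, a contradiction. *)
From HB Require Import structures.
From mathcomp Require Import all_boot all_order all_algebra.
From mathcomp Require Import all_classical all_reals all_analysis.
From mathcomp Require Import lra.
Set Implicit Arguments. Unset Strict Implicit. Unset Printing Implicit Defensive.
Import Order.TTheory GRing.Theory Num.Theory.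
Import numFieldNormedType.Exports.
Local Open Scope ring_scope.
Local Open Scope classical_set_scope.

Section euclidean.
Variables (R : realType) (m n : nat).
Implicit Types a b : 'rV[R]_n.

Lemma edotC a b : edot a b = edot b a.
Proof. by apply: eq_bigr => k _; rewrite mulrC. Qed.

Lemma edot_self_ge0 a : 0 <= edot a a.
Proof. by apply: sumr_ge0 => k _; rewrite -expr2 sqr_ge0. Qed.

Lemma enorm_le a b : edot a a <= edot b b -> enorm a <= enorm b.
Proof. by rewrite /enorm ler_sqrt // edot_self_ge0. Qed.

Lemma mnorm_le (y : 'M[R]_(m, n)) c :
  0 <= c -> (forall j, enorm (row j y) <= c) -> mnorm y <= c.
Proof. by move=> c0 yc; apply: bigmax_le. Qed.

Lemma row_delayvec (tau : nat -> R) (x : R -> 'rV[R]_n) t j :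
  row j (delayvec m tau x t) = x (t - tau j.+1).
Proof. by apply/rowP => k; rewrite !mxE. Qed.

End euclidean.

Section periodic_max.
Variables (R : realType) (T : R).
Hypothesis T_gt0 : 0 < T.

Lemma periodic_itv_repr (V : zmodType) (f : R -> V) :
  periodic f T -> forall s, exists2 s', s' \in `[0, T]%R & f s = f s'.
Proof.
move=> fT s; set k := Num.floor (s / T).
have k_le : k%:~R * T <= s by rewrite -ler_pdivlMr // Num.Theory.floor_le.
have k_gt : s < (k + 1)%:~R * T by rewrite -ltr_pdivrMr // floorD1_gt.
exists (s - k%:~R * T).
  by rewrite intrD1 in k_gt; rewrite in_itv /=; apply/andP; split; lra.
case: k k_le k_gt => k _ _.
- have -> : k%:~R * T = T *+ k by rewrite -mulr_natl.
  by rewrite -[in LHS](subrK (T *+ k) s) periodicn.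
- have -> : (Negz k)%:~R * T = - (T *+ k.+1) by rewrite NegzE mulrNz mulNr -mulr_natl.
  by rewrite opprK periodicn.
Qed.

Lemma periodic_continuous_max (g : R -> R) :
  periodic g T -> continuous g -> exists t0, forall s, g s <= g t0.
Proof.
move=> gT cg; have [t0 _ t0_max] := EVT_max (ltW T_gt0) (continuous_subspaceT cg).
by exists t0 => s; have [s' s'T ->] := periodic_itv_repr gT s; exact: t0_max.
Qed.

End periodic_max.

Section edot_derivative.
Variables (R : realType) (n : nat).
Implicit Types y z : R -> 'rV[R]_n.

Lemma is_derive_coord y t k :
  derivable y t 1 -> is_derive t 1 (fun s => y s 0 k) (derive1 y t 0 k).
Proof.
move=> dy; have dyk : derivable (fun s => y s 0 k) t 1 by move/derivable_mxP: dy.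
by apply: DeriveDef => //; rewrite derive1E derive_mx // mxE.
Qed.

Lemma is_derive_edot y z t : derivable y t 1 -> derivable z t 1 ->
  is_derive t 1 (fun s => edot (y s) (z s))
    (edot (derive1 y t) (z t) + edot (y t) (derive1 z t)).
Proof.
move=> dy dz.
have dyz k : is_derive t 1 (fun s => y s 0 k * z s 0 k)
    (derive1 y t 0 k * z t 0 k + y t 0 k * derive1 z t 0 k).
  have := is_deriveM (is_derive_coord k dy) (is_derive_coord k dz).
  rewrite (_ : _ * _ = (fun s => y s 0 k * z s 0 k) :> (R -> R)) //.
  by move/is_derive_eq; apply; rewrite addrC [z t 0 k *: _]mulrC.
have -> : (fun s => edot (y s) (z s)) = \sum_(k < n) (fun s => y s 0 k * z s 0 k).
  by apply/funext => s; rewrite fct_sumE.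
by rewrite /edot -big_split; exact: is_derive_sum.
Qed.

Lemma is_derive_edot_self y t : derivable y t 1 ->
  is_derive t 1 (fun s => edot (y s) (y s)) (2 * edot (y t) (derive1 y t)).
Proof.
move=> dy; apply: is_derive_eq; first exact: is_derive_edot.
by rewrite edotC mulr2n mulrDl mul1r.
Qed.

End edot_derivative.

Section second_derivative_test.
Variable R : realType.
Implicit Types g h : R -> R.

Lemma derivable_continuous g : (forall s, derivable g s 1) -> continuous g.
Proof. by move=> dg s; apply/differentiable_continuous/derivable1_diffP. Qed.

Lemma is_derive_gt0_right h (t0 L : R) : is_derive t0 1 h L -> 0 < L ->
  exists2 r, 0 < r & forall s, t0 < s < t0 + r -> h t0 < h s.
Proof.
move=> [dh dhL] L_gt0.
have : (fun e : R => e^-1 *: (h (e *: 1 + t0) - h t0)) @ 0^' --> L.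
  by rewrite -dhL; exact: dh.
move=> /cvgrPdist_lt /(_ (L / 2)); rewrite divr_gt0 // => /(_ isT).
move=> /nbhs_ballP[r /= r_gt0 near_t0]; exists r => // s /andP[t0s st0r].
have s_t0 : ball (0 : R) r (s - t0).
  by rewrite -ball_normE /= sub0r normrN ger0_norm; lra.
have := near_t0 _ s_t0; rewrite subr_eq0 gt_eqF // [_%:A]mulr1 subrK => /(_ isT) near_s.
have close : `|L - (s - t0)^-1 * (h s - h t0)| < L / 2 := near_s.
have : 0 < (s - t0)^-1 * (h s - h t0).
  by have := ler_norm (L - (s - t0)^-1 * (h s - h t0)); lra.
by rewrite pmulr_rgt0 ?invr_gt0 ?subr_gt0.
Qed.

Lemma is_derive_max_eq0 g dg (t0 : R) :
  (forall s : R, is_derive s 1 g (dg s)) -> (forall s, g s <= g t0) -> dg t0 = 0.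
Proof.
move=> Dg g_max; have g_derivable s : derivable g s 1 by case: (Dg s).
have t0_in : t0 \in `]t0 - 1, t0 + 1[%R by rewrite in_itv /=; apply/andP; split; lra.
have itv_t0 : t0 - 1 <= t0 + 1 by lra.
have := derive1_at_max itv_t0 (fun s _ => g_derivable s) t0_in (fun s _ => g_max s).
by move=> max_t0; rewrite -(@derive_val _ _ _ _ _ _ _ (Dg t0)) (@derive_val _ _ _ _ _ _ _ max_t0).
Qed.

Lemma is_derive_max_le0 g dg (t0 L : R) :
  (forall s : R, is_derive s 1 g (dg s)) -> is_derive t0 1 dg L ->
  (forall s, g s <= g t0) -> L <= 0.
Proof.
move=> Dg Ddg g_max; rewrite leNgt; apply/negP => L_gt0.
have cg : continuous g by apply: derivable_continuous => s; case: (Dg s).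
have dg_t0 := is_derive_max_eq0 Dg g_max.
have [r r_gt0 dg_pos] := is_derive_gt0_right Ddg L_gt0.
have t0r : t0 < t0 + r / 2 by lra.
have [c /[!in_itv] /= /andP[t0c cr] incr] :=
  MVT t0r (fun s _ => Dg s) (continuous_subspaceT cg).
have : 0 < dg c * (t0 + r / 2 - t0).
  by rewrite mulr_gt0 -?dg_t0 ?dg_pos //; lra.
by have := g_max (t0 + r / 2); lra.
Qed.

End second_derivative_test.

Theorem lemma3p2 (R : realType) (n m : nat) (tau : nat -> R)
  (f : R -> 'rV[R]_n -> 'M[R]_(m, n) -> 'rV[R]_n -> 'rV[R]_n) (R0 : R) :
  (1 <= n)%N -> (1 <= m)%N ->
  admissible_delays m tau ->
  condA0 f -> 0 < R0 -> condA1 f R0 -> condA2 f R0 -> condA3 f R0 ->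
  forall x : R -> 'rV[R]_n, periodic_solution tau f x ->
  forall t : R, enorm (x t) <= R0.
Proof.
move=> _ _ _ _ _ A1 _ _ x [dx dx' _ x_per x_eq] t.
pose g s := edot (x s) (x s).
have Dg (s : R) : is_derive s 1 g (2 * edot (x s) (derive1 x s)) := is_derive_edot_self (dx s).
have g_per : periodic g (2 * pi) by move=> s; rewrite /g x_per.
have g_cont : continuous g by apply: derivable_continuous => s; case: (Dg s).
have two_pi_gt0 : 0 < 2 * pi :> R by rewrite mulr_gt0 // pi_gt0.
have [t0 g_max] := periodic_continuous_max two_pi_gt0 g_per g_cont.
have x_le s : enorm (x s) <= enorm (x t0) := enorm_le (g_max s).
rewrite leNgt; apply/negP => xt_gt.
have R0_le : R0 <= enorm (x t0) := ltW (lt_le_trans xt_gt (x_le t)).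
have delay_le : mnorm (delayvec m tau x t0) <= enorm (x t0).
  by apply: mnorm_le => [|j]; [exact: sqrtr_ge0 | rewrite row_delayvec].
have x_x'_t0 : edot (x t0) (derive1 x t0) = 0.
  by have := is_derive_max_eq0 Dg g_max; lra.
have x_x''_gt0 : 0 < edot (x t0) (derive1 (derive1 x) t0) by rewrite x_eq; apply: A1.
have Ddg : is_derive t0 1 (fun s => 2 * edot (x s) (derive1 x s))
    (2 * (edot (derive1 x t0) (derive1 x t0) + edot (x t0) (derive1 (derive1 x) t0))).
  by have := is_deriveZ 2 (is_derive_edot (dx t0) (dx' t0)); apply.
have := is_derive_max_le0 Dg Ddg g_max.
by have := edot_self_ge0 (derive1 x t0); lra.
Qed.
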